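(* Let $0<\alpha\le\delta<\infty$, $0<\gamma<\tfrac13$, and let $H_{\gamma/\delta}$ be the Banach space of real sequences $x=(x_k)_{k\ge0}$ with $\|x\|=\sum_{k\ge0}(\gamma/\delta)^k|x_k|<\infty$. Let $\mathcal R^a_1(a)_k=\frac{1}{k+1}\sum_{n=0}^ka_na_{k-n}$. If $a_0\in X_{\alpha,\delta}$ and $a(t)$ denotes the solution of the initial value problem $\frac{d}{dt}a(t)=\mathcal R^a_1(a(t))-a(t)$, $a(0)=a_0$, in $H_{\gamma/\delta}$, then $a(t)\in X_{\alpha,\delta}$ for all $t\ge0$ and $\lim_{t\to\infty}\|a(t)-\bar\alpha\|=0$, where $\bar\alpha=(1,\alpha,\alpha^2,\alpha^3,\dots)$.
   Context: $X_{\alpha,\delta}$ is the set of real sequences $a=(a_k)_{k\ge0}$ with $a_0=1$, $a_1=\alpha$, $0\le a_k\le\delta^k$ for $k\ge2$; it is a subset of $H_{\gamma/\delta}$, and the metric on it is $d(a,b)=\|a-b\|$. *)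

From Stdlib Require Import Reals Lra.
From Coquelicot Require Import Coquelicot.
Open Scope R_scope.

Definition seqR := nat -> R.

Definition inH (w : R) (x : seqR) : Prop :=
  ex_series (fun k => w ^ k * Rabs (x k)).

Definition normH (w : R) (x : seqR) : R :=
  Series (fun k => w ^ k * Rabs (x k)).

Definition seq_sub (x y : seqR) : seqR := fun k => x k - y k.
Definition seq_scal (c : R) (x : seqR) : seqR := fun k => c * x k.

Definition Ra1 (a : seqR) : seqR :=
  fun k => / INR (S k) * sum_f_R0 (fun n => a n * a (k - n)%nat) k.

Definition ode_field (a : seqR) : seqR := seq_sub (Ra1 a) a.

Definition X_set (alpha delta : R) (a : seqR) : Prop :=
  a 0%nat = 1 /\ a 1%nat = alpha /\
  forall k : nat, (2 <= k)%nat -> 0 <= a k <= delta ^ k.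

Definition alpha_bar (alpha : R) : seqR := fun k => alpha ^ k.

Definition is_H_solution (w : R) (F : seqR -> seqR) (u0 : seqR) (u : R -> seqR) : Prop :=
  u 0 = u0 /\
  (forall t, 0 <= t -> inH w (u t)) /\
  (forall t, 0 <= t ->
     forall eps, 0 < eps -> exists d, 0 < d /\
       forall h, h <> 0 -> Rabs h < d -> 0 <= t + h ->
         let q := seq_sub (seq_scal (/ h) (seq_sub (u (t + h)) (u t))) (F (u t)) in
         inH w q /\ normH w q < eps).

(* Each coordinate functional x |-> x_k is bounded on H_w (w^k |x_k| <= ||x||), so
   every coordinate a_k(t) of the solution solves, on [0, oo), the scalar equation
     a_k' = 1/(k+1) sum_(n=0..k) a_n a_(k-n) - a_k.
   For k = 0 this is a_0' = a_0 (a_0 - 1) with a_0(0) = 1, so a_0 = 1 by Gronwall's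
   argument; then a_1' = 0, so a_1 = alpha.  For k >= 2 the equation is linear,
     a_k' = - (k-1)/(k+1) a_k + g_k,
   with a forcing term g_k built from a_1, ..., a_(k-1) only.  By strong induction on k,
   g_k takes values in [0, (k-1)/(k+1) delta^k] and tends to (k-1)/(k+1) alpha^k, and
   comparison with the explicit solutions B + C exp (-(k-1)/(k+1) t) of the equation with
   constant forcing shows that a_k stays in [0, delta^k] and tends to alpha^k.  Hence the
   k-th term of ||a(t) - alpha_bar|| is at most (gamma/delta)^k delta^k = gamma^k for all
   t and tends to 0, and dominated convergence for series gives the limit; only
   gamma < 1 is used. *)

From Stdlib Require Import Reals Lra Lia.
From Coquelicot Require Import Coquelicot.
Open Scope R_scope.

Lemma sum_f_R0_le_Series (u : nat -> R) (n : nat) :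
  (forall k, 0 <= u k) -> ex_series u -> sum_f_R0 u n <= Series u.
Proof.
  intros Hu Hex. apply growing_ineq.
  - intros m. simpl. specialize (Hu (S m)). lra.
  - apply is_series_Reals, Series_correct, Hex.
Qed.

Lemma term_le_Series (u : nat -> R) (k : nat) :
  (forall k, 0 <= u k) -> ex_series u -> u k <= Series u.
Proof.
  intros Hu Hex. apply Rle_trans with (sum_f_R0 u k).
  - destruct k as [|k]; simpl; [lra|].
    assert (0 <= sum_f_R0 u k) by (apply cond_pos_sum; exact Hu). lra.
  - apply sum_f_R0_le_Series; assumption.
Qed.

Lemma is_lim_sum_f_R0 (f : R -> nat -> R) (l : nat -> R) (x : Rbar) (n : nat) :
  (forall i, (i <= n)%nat -> is_lim (fun t => f t i) x (l i)) ->
  is_lim (fun t => sum_f_R0 (f t) n) x (sum_f_R0 l n).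
Proof.
  induction n as [|n IH]; intros Hf; simpl.
  - apply Hf. lia.
  - apply is_lim_plus'; [apply IH; intros i Hi|]; apply Hf; lia.
Qed.

Lemma is_lim_Series_dominated (u : R -> nat -> R) (M : nat -> R) :
  ex_series M ->
  Rbar_locally p_infty (fun t => forall k, 0 <= u t k <= M k) ->
  (forall k, is_lim (fun t => u t k) p_infty 0) ->
  is_lim (fun t => Series (u t)) p_infty 0.
Proof.
  intros HM Hdom Hlim. apply is_lim_spec. intros eps.
  change (Rbar_locally p_infty (fun t => Rabs (Series (u t) - 0) < eps)).
  assert (Heps := cond_pos eps).
  destruct (proj1 (is_series_Reals M _) (Series_correct M HM) (eps / 2))
    as [N HN]; [lra|].
  specialize (HN N (Nat.le_refl N)). unfold Rdist in HN.
  assert (Htail : Series (fun k => M (S N + k)%nat) < eps / 2).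
  { assert (Hsplit : Series M = sum_f_R0 M N + Series (fun k => M (S N + k)%nat))
      by (apply (Series_incr_n M (S N)); [lia | exact HM]).
    apply Rabs_def2 in HN. lra. }
  assert (Hhead : Rbar_locally p_infty
                    (fun t => Rabs (sum_f_R0 (u t) N - 0) < eps / 2)).
  { assert (Hsum0 : is_lim (fun t => sum_f_R0 (u t) N) p_infty 0).
    { replace 0 with (sum_f_R0 (fun _ => 0) N) by (rewrite sum_cte; ring).
      apply is_lim_sum_f_R0. intros i _. apply Hlim. }
    exact (proj2 (is_lim_spec _ _ _) Hsum0 (pos_div_2 eps)). }
  generalize (filter_and _ _ Hdom Hhead).
  apply filter_imp. intros t [Hut Hsum].
  assert (Hex : ex_series (u t)).
  { apply (ex_series_le (u t) M); [|exact HM].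
    intros k. rewrite Rabs_pos_eq; apply Hut. }
  assert (Hsplit : Series (u t) = sum_f_R0 (u t) N + Series (fun k => u t (S N + k)%nat))
    by (apply (Series_incr_n (u t) (S N)); [lia | exact Hex]).
  assert (Hu0 : 0 <= Series (u t)).
  { apply Rle_trans with (u t 0%nat); [apply Hut|].
    apply term_le_Series; [apply Hut | exact Hex]. }
  assert (Hut_tail : Series (fun k => u t (S N + k)%nat)
                     <= Series (fun k => M (S N + k)%nat)).
  { apply Series_le; [intros k; apply Hut|].
    apply (ex_series_incr_n M (S N)), HM. }
  rewrite Rminus_0_r in Hsum |- *. apply Rabs_def2 in Hsum.
  rewrite Rabs_pos_eq by exact Hu0. lra.
Qed.

Lemma exp_weighted_nonincreasing (F dF : R -> R) (c s t : R) :
  s <= t ->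
  (forall x, s <= x <= t -> continuity_pt F x) ->
  (forall x, s < x < t -> is_derive F x (dF x)) ->
  (forall x, s <= x <= t -> dF x + c * F x <= 0) ->
  F t * exp (c * t) <= F s * exp (c * s).
Proof.
  intros Hst HF HdF Hsign.
  destruct (MVT_gen (fun x => F x * exp (c * x)) s t
              (fun x => (dF x + c * F x) * exp (c * x))) as [y [Hy Hmvt]];
    rewrite ?Rmin_left, ?Rmax_right in * by lra.
  - intros x Hx.
    assert (Hexp : is_derive (fun x => exp (c * x)) x (c * exp (c * x)))
      by (auto_derive; [easy | ring]).
    evar (d : R). replace ((dF x + c * F x) * exp (c * x)) with d; subst d.
    + exact (is_derive_mult _ _ x _ _ (HdF x Hx) Hexp Rmult_comm).
    + unfold plus, mult; simpl. ring.
  - intros x Hx. apply continuity_pt_filterlim.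
    apply (continuous_mult F (fun x => exp (c * x))).
    + apply continuity_pt_filterlim, HF, Hx.
    + apply (ex_derive_continuous (fun x => exp (c * x))). auto_derive. easy.
  - assert (Hneg : (dF y + c * F y) * exp (c * y) <= 0).
    { apply Rmult_le_0_r; [apply Hsign, Hy | apply Rlt_le, exp_pos]. }
    nra.
Qed.

Lemma exp_weighted_le (u v c s t : R) :
  u * exp (c * t) <= v * exp (c * s) -> u <= v * exp (- c * (t - s)).
Proof.
  intros H.
  assert (Hexp : exp (- c * (t - s)) * exp (c * t) = exp (c * s))
    by (rewrite <- exp_plus; f_equal; ring).
  apply (Rmult_le_reg_r (exp (c * t))); [apply exp_pos|].
  rewrite Rmult_assoc, Hexp. exact H.
Qed.

Lemma is_lim_exp_relax (B K c s : R) :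
  0 < c -> is_lim (fun t => B + K * exp (- c * (t - s))) p_infty B.
Proof.
  intros Hc.
  assert (Hexp : is_lim (fun t => exp (- c * t + c * s)) p_infty 0).
  { apply is_lim_comp_lin; [|lra].
    replace (Rbar_mult (- c) p_infty) with m_infty; [exact is_lim_exp_m|].
    symmetry. apply is_Rbar_mult_unique, is_Rbar_mult_sym, is_Rbar_mult_p_infty_neg.
    simpl. lra. }
  replace (Finite B) with (Rbar_plus B (Rbar_mult K 0)) by (simpl; f_equal; ring).
  apply (is_lim_plus _ _ _ B (Rbar_mult K 0)); [apply is_lim_const| |easy].
  apply is_lim_scal_l.
  apply (is_lim_ext (fun t => exp (- c * t + c * s))); [|exact Hexp].
  intros t. f_equal. ring.
Qed.

Section LinearODE.

Variables (f g : R -> R) (c : R).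
Hypothesis f_cont : forall x, 0 <= x -> continuity_pt f x.
Hypothesis f_derive : forall x, 0 < x -> is_derive f x (- c * f x + g x).

Lemma linear_ode_le (B s t : R) :
  0 <= s <= t -> (forall x, s <= x <= t -> g x <= c * B) ->
  f t <= B + (f s - B) * exp (- c * (t - s)).
Proof.
  intros Hst Hg.
  cut (f t - B <= (f s - B) * exp (- c * (t - s))); [lra|].
  apply exp_weighted_le.
  apply (exp_weighted_nonincreasing (fun x => f x - B) (fun x => - c * f x + g x));
    [lra | | |].
  - intros x Hx. apply continuity_pt_minus; [apply f_cont; lra|].
    apply continuity_pt_const. easy.
  - intros x Hx.
    assert (Hd := is_derive_minus f (fun _ => B) x _ _
                    (f_derive x ltac:(lra)) (is_derive_const B x)).
    unfold minus, plus, opp, zero in Hd; simpl in Hd.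
    rewrite Ropp_0, Rplus_0_r in Hd. exact Hd.
  - intros x Hx. specialize (Hg x Hx). lra.
Qed.

Lemma linear_ode_ge (B s t : R) :
  0 <= s <= t -> (forall x, s <= x <= t -> c * B <= g x) ->
  B + (f s - B) * exp (- c * (t - s)) <= f t.
Proof.
  intros Hst Hg.
  cut (B - f t <= (B - f s) * exp (- c * (t - s))); [lra|].
  apply exp_weighted_le.
  apply (exp_weighted_nonincreasing (fun x => B - f x)
           (fun x => - (- c * f x + g x))); [lra | | |].
  - intros x Hx. apply continuity_pt_minus; [|apply f_cont; lra].
    apply continuity_pt_const. easy.
  - intros x Hx.
    assert (Hd := is_derive_minus (fun _ => B) f x _ _
                    (is_derive_const B x) (f_derive x ltac:(lra))).
    unfold minus, plus, opp, zero in Hd; simpl in Hd.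
    rewrite Rplus_0_l in Hd. exact Hd.
  - intros x Hx. specialize (Hg x Hx). lra.
Qed.

Lemma linear_ode_invariant_interval (D : R) :
  (forall x, 0 <= x -> 0 <= g x <= c * D) -> 0 <= f 0 <= D ->
  forall t, 0 <= t -> 0 <= f t <= D.
Proof.
  intros Hg Hf0 t Ht.
  assert (Hupper := linear_ode_le D 0 t).
  assert (Hlower := linear_ode_ge 0 0 t).
  assert (0 < exp (- c * (t - 0))) by apply exp_pos.
  split.
  - apply Rle_trans with (0 + (f 0 - 0) * exp (- c * (t - 0))); [nra|].
    apply Hlower; [lra|]. intros x Hx. rewrite Rmult_0_r. apply Hg. lra.
  - apply Rle_trans with (D + (f 0 - D) * exp (- c * (t - 0))); [|nra].
    apply Hupper; [lra|]. intros x Hx. apply Hg. lra.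
Qed.

Lemma linear_ode_limit (L : R) :
  0 < c -> is_lim g p_infty (c * L) -> is_lim f p_infty L.
Proof.
  intros Hc Hg. apply is_lim_spec. intros eps.
  change (Rbar_locally p_infty (fun t => Rabs (f t - L) < eps)).
  assert (Heps := cond_pos eps).
  assert (Hce : 0 < c * (eps / 2)) by (apply Rmult_lt_0_compat; lra).
  destruct (proj2 (is_lim_spec _ _ _) Hg (mkposreal _ Hce)) as [T HT].
  set (s := Rmax T 0 + 1).
  assert (Hs : T < s /\ 0 < s) by (generalize (Rmax_l T 0) (Rmax_r T 0); unfold s; lra).
  assert (Hgs : forall x, s <= x -> Rabs (g x - c * L) < c * (eps / 2))
    by (intros x Hx; apply HT; lra).
  (* Beyond s, f is squeezed between solutions with constant forcing c (L +- eps/2),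
     which relax to L +- eps/2. *)
  set (up := L + eps / 2). set (lo := L - eps / 2).
  assert (Hup := proj2 (is_lim_spec _ _ _)
                   (is_lim_exp_relax up (f s - up) c s Hc) (pos_div_2 eps)).
  assert (Hlo := proj2 (is_lim_spec _ _ _)
                   (is_lim_exp_relax lo (f s - lo) c s Hc) (pos_div_2 eps)).
  assert (Hfar : Rbar_locally p_infty (fun t => s <= t)) by (exists s; intros; lra).
  generalize (filter_and _ _ Hfar (filter_and _ _ Hup Hlo)).
  apply filter_imp. intros t [Hst [Hut Hlt]].
  apply Rabs_def2 in Hut, Hlt.
  assert (Hle : f t <= up + (f s - up) * exp (- c * (t - s))).
  { apply linear_ode_le; [lra|]. intros x Hx.
    assert (H := Hgs x ltac:(lra)). apply Rabs_def2 in H. unfold up. lra. }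
  assert (Hge : lo + (f s - lo) * exp (- c * (t - s)) <= f t).
  { apply linear_ode_ge; [lra|]. intros x Hx.
    assert (H := Hgs x ltac:(lra)). apply Rabs_def2 in H. unfold lo. lra. }
  simpl in Hut, Hlt. unfold up, lo in *. apply Rabs_def1; lra.
Qed.

End LinearODE.

Definition is_derive_nonneg (f df : R -> R) : Prop :=
  forall t, 0 <= t -> forall eps, 0 < eps -> exists d, 0 < d /\
    forall h, h <> 0 -> Rabs h < d -> 0 <= t + h ->
      Rabs ((f (t + h) - f t) / h - df t) < eps.

(* Extending by the value at 0 makes the two-sided calculus (MVT, [continuity_pt])
   available on intervals [0, t]. *)
Definition extend_nonneg (f : R -> R) (t : R) : R := f (Rmax 0 t).

Lemma extend_nonneg_eq (f : R -> R) (t : R) : 0 <= t -> extend_nonneg f t = f t.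
Proof. intros Ht. unfold extend_nonneg. rewrite Rmax_right by exact Ht. reflexivity. Qed.

Lemma Rabs_Rmax0_sub_le (x t : R) : 0 <= t -> Rabs (Rmax 0 x - t) <= Rabs (x - t).
Proof.
  intros Ht. destruct (Rle_dec 0 x) as [Hx|Hx].
  - rewrite Rmax_right by exact Hx. lra.
  - rewrite Rmax_left by lra. rewrite Rminus_0_l, Rabs_Ropp.
    rewrite (Rabs_pos_eq t), (Rabs_left1 (x - t)) by lra. lra.
Qed.

Section RightDerivative.

Variables (f df : R -> R).
Hypothesis f_derive : is_derive_nonneg f df.

Lemma is_derive_nonneg_lipschitz (t : R) : 0 <= t ->
  exists d, 0 < d /\ forall h, Rabs h < d -> 0 <= t + h ->
    Rabs (f (t + h) - f t) <= (Rabs (df t) + 1) * Rabs h.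
Proof.
  intros Ht. destruct (f_derive t Ht 1) as [d [Hd Hq]]; [lra|].
  exists d. split; [exact Hd|]. intros h Hh Hth.
  destruct (Req_dec h 0) as [->|Hh0].
  - rewrite Rplus_0_r, Rminus_diag, !Rabs_R0. lra.
  - replace (f (t + h) - f t) with (((f (t + h) - f t) / h - df t) * h + df t * h)
      by (field; exact Hh0).
    eapply Rle_trans; [apply Rabs_triang|]. rewrite !Rabs_mult.
    specialize (Hq h Hh0 Hh Hth). assert (Hh' := Rabs_pos h). nra.
Qed.

Lemma extend_nonneg_continuous (t : R) : 0 <= t -> continuity_pt (extend_nonneg f) t.
Proof.
  intros Ht eps Heps.
  destruct (is_derive_nonneg_lipschitz t Ht) as [d [Hd Hlip]].
  set (K := Rabs (df t) + 1).
  assert (HK : 0 < K) by (assert (H := Rabs_pos (df t)); unfold K; lra).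
  exists (Rmin d (eps / K)). split; [apply Rmin_pos; [lra | apply Rdiv_lt_0_compat; lra]|].
  intros x [_ Hx]. simpl in *. unfold R_dist in *.
  assert (Hxd : Rabs (x - t) < d) by (eapply Rlt_le_trans; [exact Hx | apply Rmin_l]).
  assert (HxK : K * Rabs (x - t) < eps).
  { assert (Hxe : Rabs (x - t) < eps / K)
      by (eapply Rlt_le_trans; [exact Hx | apply Rmin_r]).
    apply (Rmult_lt_compat_l K) in Hxe; [|exact HK].
    replace (K * (eps / K)) with eps in Hxe by (field; lra). exact Hxe. }
  assert (Hmax := Rabs_Rmax0_sub_le x t Ht).
  assert (Hlx := Hlip (Rmax 0 x - t) ltac:(lra) ltac:(assert (H := Rmax_l 0 x); lra)).
  replace (t + (Rmax 0 x - t)) with (Rmax 0 x) in Hlx by ring.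
  unfold extend_nonneg. rewrite (Rmax_right 0 t) by exact Ht.
  fold K in Hlx. nra.
Qed.

Lemma extend_nonneg_derive (t : R) : 0 < t -> is_derive (extend_nonneg f) t (df t).
Proof.
  intros Ht. apply is_derive_Reals. intros eps Heps.
  destruct (f_derive t ltac:(lra) eps Heps) as [d [Hd Hq]].
  assert (Hm : 0 < Rmin d t) by (apply Rmin_pos; lra).
  exists (mkposreal _ Hm). intros h Hh0 Hh. simpl in Hh.
  assert (Hhd : Rabs h < d) by (eapply Rlt_le_trans; [exact Hh | apply Rmin_l]).
  assert (Hht : Rabs h < t) by (eapply Rlt_le_trans; [exact Hh | apply Rmin_r]).
  apply Rabs_def2 in Hht.
  rewrite !extend_nonneg_eq by lra. apply Hq; [exact Hh0 | exact Hhd | lra].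
Qed.

End RightDerivative.

Lemma coord_le_normH (w : R) (x : seqR) (k : nat) :
  0 < w -> inH w x -> w ^ k * Rabs (x k) <= normH w x.
Proof.
  intros Hw Hx. apply (term_le_Series (fun k => w ^ k * Rabs (x k))); [|exact Hx].
  intros n. apply Rmult_le_pos; [apply pow_le; lra | apply Rabs_pos].
Qed.

Lemma H_solution_coord_derive (w : R) (F : seqR -> seqR) (u0 : seqR) (u : R -> seqR)
    (k : nat) :
  0 < w -> is_H_solution w F u0 u ->
  is_derive_nonneg (fun t => u t k) (fun t => F (u t) k).
Proof.
  intros Hw [_ [_ Hder]] t Ht eps Heps.
  assert (Hwk : 0 < w ^ k) by (apply pow_lt, Hw).
  destruct (Hder t Ht (w ^ k * eps)) as [d [Hd Hq]]; [nra|].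
  exists d. split; [exact Hd|]. intros h Hh0 Hh Hth.
  destruct (Hq h Hh0 Hh Hth) as [Hin Hnorm]. cbv zeta in Hin, Hnorm.
  set (q := seq_sub _ _) in Hin, Hnorm.
  assert (Hk := coord_le_normH w q k Hw Hin).
  replace (q k) with ((u (t + h) k - u t k) / h - F (u t) k) in Hk
    by (unfold q, seq_sub, seq_scal, Rdiv; ring).
  nra.
Qed.

Lemma homogeneous_ode_zero (f h : R -> R) (M t : R) :
  0 <= t ->
  (forall x, 0 <= x <= t -> continuity_pt f x) ->
  (forall x, 0 < x < t -> is_derive f x (h x * f x)) ->
  (forall x, 0 <= x <= t -> h x <= M) ->
  f 0 = 0 -> f t = 0.
Proof.
  intros Ht Hcont Hder HM Hf0.
  (* Gronwall: f x ^ 2 * exp (- 2 M x) is nonincreasing. *)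
  assert (Hsq : f t ^ 2 * exp (- 2 * M * t) <= f 0 ^ 2 * exp (- 2 * M * 0)).
  { apply (exp_weighted_nonincreasing (fun x => f x ^ 2)
             (fun x => INR 2 * (h x * f x) * f x ^ Init.Nat.pred 2)); [exact Ht | | |].
    - intros x Hx. apply continuity_pt_filterlim.
      apply (continuous_comp f (fun y => y ^ 2)).
      + apply continuity_pt_filterlim, Hcont, Hx.
      + apply (ex_derive_continuous (fun y => y ^ 2)). auto_derive. easy.
    - intros x Hx. apply is_derive_pow, Hder, Hx.
    - intros x Hx. specialize (HM x Hx). assert (0 <= f x ^ 2) by apply pow2_ge_0.
      simpl. nra. }
  rewrite Hf0, pow_i, Rmult_0_l in Hsq by lia.
  assert (Hexp : 0 < exp (- 2 * M * t)) by apply exp_pos.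
  assert (Hft : f t ^ 2 <= 0).
  { apply (Rmult_le_reg_r _ _ _ Hexp). lra. }
  nra.
Qed.

Lemma ode_field_0 (b : seqR) : ode_field b 0%nat = b 0%nat * (b 0%nat - 1).
Proof. unfold ode_field, seq_sub, Ra1. simpl. field. Qed.

Lemma ode_field_1 (b : seqR) : b 0%nat = 1 -> ode_field b 1%nat = 0.
Proof. intros Hb0. unfold ode_field, seq_sub, Ra1. simpl. rewrite Hb0. field. Qed.

(* [conv_inner b m] = sum_(n=1..m+1) b_n b_(m+2-n): the Cauchy square at index m+2
   without its two terms containing b_0. *)
Definition conv_inner (b : seqR) (m : nat) : R :=
  sum_f_R0 (fun i => b (S i) * b (S m - i)%nat) m.

Lemma ode_field_SS (b : seqR) (m : nat) : b 0%nat = 1 ->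
  ode_field b (S (S m)) =
  - (INR (S m) / INR (S (S (S m)))) * b (S (S m)) + conv_inner b m / INR (S (S (S m))).
Proof.
  intros Hb0. unfold ode_field, seq_sub, Ra1, conv_inner.
  rewrite tech5, decomp_sum by lia. simpl Init.Nat.pred.
  rewrite Nat.sub_diag, Nat.sub_0_r, Hb0.
  change (S (S m) - S ?i)%nat with (S m - i)%nat.
  assert (HN : INR (S (S (S m))) = INR (S m) + 2) by (rewrite !S_INR; ring).
  rewrite HN. assert (0 <= INR (S m)) by apply pos_INR.
  field. lra.
Qed.

Lemma conv_inner_bounds (b : seqR) (m : nat) (D : R) :
  (forall j, (1 <= j <= S m)%nat -> 0 <= b j <= D ^ j) ->
  0 <= conv_inner b m <= INR (S m) * D ^ S (S m).
Proof.
  intros Hb. unfold conv_inner. split.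
  - replace 0 with (sum_f_R0 (fun _ => 0) m) by (rewrite sum_cte; ring).
    apply sum_Rle. intros i Hi.
    apply Rmult_le_pos; [apply (Hb (S i)) | apply (Hb (S m - i)%nat)]; lia.
  - rewrite Rmult_comm, <- sum_cte. apply sum_Rle. intros i Hi.
    replace (S (S m)) with (S i + (S m - i))%nat by lia. rewrite pow_add.
    destruct (Hb (S i)) as [H1 H2]; [lia|].
    destruct (Hb (S m - i)%nat) as [H3 H4]; [lia|].
    apply Rmult_le_compat; assumption.
Qed.

Lemma is_lim_conv_inner (u : R -> seqR) (m : nat) (L : R) :
  (forall j, (1 <= j <= S m)%nat -> is_lim (fun t => u t j) p_infty (L ^ j)) ->
  is_lim (fun t => conv_inner (u t) m) p_infty (INR (S m) * L ^ S (S m)).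
Proof.
  intros Hu. unfold conv_inner. rewrite Rmult_comm, <- sum_cte.
  apply is_lim_sum_f_R0. intros i Hi.
  replace (S (S m)) with (S i + (S m - i))%nat by lia. rewrite pow_add.
  apply (is_lim_mult _ _ p_infty (L ^ S i) (L ^ (S m - i))); [apply Hu; lia.. | easy].
Qed.

Section Solution.

Variables (alpha delta gamma : R) (a0 : seqR) (a : R -> seqR).
Hypotheses (alpha_pos : 0 < alpha) (alpha_le_delta : alpha <= delta)
  (gamma_pos : 0 < gamma) (gamma_lt_1 : gamma < 1)
  (a0_in_X : X_set alpha delta a0)
  (a_sol : is_H_solution (gamma / delta) ode_field a0 a).

Let coord (k : nat) : R -> R := extend_nonneg (fun t => a t k).

Lemma weight_pos : 0 < gamma / delta.
Proof. apply Rdiv_lt_0_compat; lra. Qed.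

Lemma coord_continuous (k : nat) (t : R) : 0 <= t -> continuity_pt (coord k) t.
Proof.
  apply (extend_nonneg_continuous _ (fun t => ode_field (a t) k)).
  exact (H_solution_coord_derive _ _ _ _ k weight_pos a_sol).
Qed.

Lemma coord_derive (k : nat) (t : R) : 0 < t -> is_derive (coord k) t (ode_field (a t) k).
Proof.
  apply (extend_nonneg_derive _ (fun t => ode_field (a t) k)).
  exact (H_solution_coord_derive _ _ _ _ k weight_pos a_sol).
Qed.

Lemma coord_at_0 (k : nat) : coord k 0 = a0 k.
Proof.
  unfold coord. rewrite extend_nonneg_eq by lra. destruct a_sol as [-> _]. reflexivity.
Qed.

Lemma a_coord_0 (t : R) : 0 <= t -> a t 0%nat = 1.
Proof.
  intros Ht.
  destruct (continuity_ab_maj (coord 0) 0 t Ht) as [tmax [Hmax _]].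
  { intros x Hx. apply coord_continuous. lra. }
  cut (coord 0 t - 1 = 0); [unfold coord; rewrite extend_nonneg_eq by lra; lra|].
  apply (homogeneous_ode_zero (fun x => coord 0 x - 1) (coord 0) (coord 0 tmax) t Ht).
  - intros x Hx. apply continuity_pt_minus; [apply coord_continuous; lra|].
    apply continuity_pt_const. easy.
  - intros x Hx.
    assert (Hd := is_derive_minus (coord 0) (fun _ => 1) x _ _
                    (coord_derive 0 x ltac:(lra)) (is_derive_const 1 x)).
    unfold minus, plus, opp, zero in Hd; simpl in Hd.
    rewrite Ropp_0, Rplus_0_r, ode_field_0 in Hd.
    unfold coord. rewrite extend_nonneg_eq by lra. exact Hd.
  - intros x Hx. apply Hmax. exact Hx.
  - rewrite coord_at_0. destruct a0_in_X as [-> _]. ring.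
Qed.

Lemma a_coord_1 (t : R) : 0 <= t -> a t 1%nat = alpha.
Proof.
  intros Ht.
  assert (Hcont : forall x, 0 <= x -> continuity_pt (coord 1) x) by apply coord_continuous.
  assert (Hder : forall x, 0 < x -> is_derive (coord 1) x (- 0 * coord 1 x + 0)).
  { intros x Hx. replace (- 0 * coord 1 x + 0) with (ode_field (a x) 1%nat).
    - apply coord_derive, Hx.
    - rewrite ode_field_1 by (apply a_coord_0; lra). ring. }
  assert (Hle := linear_ode_le _ _ _ Hcont Hder alpha 0 t).
  assert (Hge := linear_ode_ge _ _ _ Hcont Hder alpha 0 t).
  rewrite coord_at_0 in Hle, Hge. destruct a0_in_X as [_ [Ha01 _]].
  rewrite Ha01, Rminus_diag, !Rmult_0_l, Rplus_0_r in Hle, Hge.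
  unfold coord in Hle, Hge. rewrite extend_nonneg_eq in Hle, Hge by exact Ht.
  apply Rle_antisym; [apply Hle | apply Hge]; intros; lra.
Qed.

Definition coord_bounded_convergent (k : nat) : Prop :=
  (forall t, 0 <= t -> 0 <= a t k <= delta ^ k) /\
  is_lim (fun t => a t k) p_infty (alpha ^ k).

Lemma coord_bounded_convergent_SS (m : nat) :
  (forall j, (1 <= j <= S m)%nat -> coord_bounded_convergent j) ->
  coord_bounded_convergent (S (S m)).
Proof.
  intros IH.
  set (N := INR (S (S (S m)))).
  set (c := INR (S m) / N).
  set (g := fun x => conv_inner (a (Rmax 0 x)) m / N).
  assert (HN : 0 < N) by (apply lt_0_INR; lia).
  assert (Hc : 0 < c) by (apply Rdiv_lt_0_compat; [apply lt_0_INR; lia | exact HN]).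
  assert (Hcont : forall x, 0 <= x -> continuity_pt (coord (S (S m))) x)
    by apply coord_continuous.
  assert (Hder : forall x, 0 < x ->
            is_derive (coord (S (S m))) x (- c * coord (S (S m)) x + g x)).
  { intros x Hx. unfold g. rewrite Rmax_right by lra.
    unfold coord at 2. rewrite extend_nonneg_eq by lra.
    replace (- c * a x (S (S m)) + conv_inner (a x) m / N)
      with (ode_field (a x) (S (S m))) by (apply ode_field_SS, a_coord_0; lra).
    apply coord_derive, Hx. }
  split.
  - intros t Ht. rewrite <- (extend_nonneg_eq (fun t => a t (S (S m)))) by exact Ht.
    apply (linear_ode_invariant_interval _ g c Hcont Hder); [| |exact Ht].
    + intros x Hx.
      destruct (conv_inner_bounds (a (Rmax 0 x)) m delta) as [Hb1 Hb2].
      { intros j Hj. apply (IH j Hj), Rmax_l. }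
      unfold g, c. split; [apply Rdiv_le_0_compat; lra|].
      replace (INR (S m) / N * delta ^ S (S m))
        with (INR (S m) * delta ^ S (S m) / N) by (field; lra).
      apply Rmult_le_compat_r; [apply Rlt_le, Rinv_0_lt_compat, HN | exact Hb2].
    + fold (coord (S (S m)) 0). rewrite coord_at_0.
      destruct a0_in_X as [_ [_ Ha0]]. apply Ha0. lia.
  - apply (is_lim_ext_loc (coord (S (S m)))).
    { exists 0. intros t Ht. apply extend_nonneg_eq. lra. }
    apply (linear_ode_limit _ g c Hcont Hder _ Hc).
    apply (is_lim_ext_loc (fun x => conv_inner (a x) m * / N)).
    { exists 0. intros x Hx. unfold g. rewrite Rmax_right by lra. reflexivity. }
    replace (c * alpha ^ S (S m)) with (INR (S m) * alpha ^ S (S m) * / N)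
      by (unfold c; field; lra).
    apply (is_lim_scal_r (fun x => conv_inner (a x) m) (/ N) p_infty
             (INR (S m) * alpha ^ S (S m))).
    apply is_lim_conv_inner. intros j Hj. apply (IH j Hj).
Qed.

Lemma coord_bounded_convergent_all (k : nat) : coord_bounded_convergent k.
Proof.
  induction k as [k IH] using (well_founded_induction Wf_nat.lt_wf).
  destruct k as [|[|m]].
  - split.
    + intros t Ht. rewrite a_coord_0 by exact Ht. simpl. lra.
    + apply (is_lim_ext_loc (fun _ => 1)); [|apply is_lim_const].
      exists 0. intros t Ht. symmetry. apply a_coord_0. lra.
  - split.
    + intros t Ht. rewrite a_coord_1 by exact Ht. simpl. lra.
    + apply (is_lim_ext_loc (fun _ => alpha ^ 1)); [|apply is_lim_const].
      exists 0. intros t Ht. rewrite a_coord_1 by lra. simpl. ring.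
  - apply coord_bounded_convergent_SS. intros j Hj. apply IH. lia.
Qed.

Lemma a_coord_bounds (k : nat) (t : R) : 0 <= t -> 0 <= a t k <= delta ^ k.
Proof. apply (proj1 (coord_bounded_convergent_all k)). Qed.

Lemma is_lim_a_coord (k : nat) : is_lim (fun t => a t k) p_infty (alpha ^ k).
Proof. exact (proj2 (coord_bounded_convergent_all k)). Qed.

Lemma Rabs_a_coord_sub_le (t : R) (k : nat) :
  0 <= t -> Rabs (a t k - alpha ^ k) <= delta ^ k.
Proof.
  intros Ht. assert (Hb := a_coord_bounds k t Ht).
  assert (0 <= alpha ^ k <= delta ^ k)
    by (split; [apply pow_le | apply pow_incr]; lra).
  apply Rabs_le. lra.
Qed.

Lemma is_lim_normH_sub_alpha_bar :
  is_lim (fun t => normH (gamma / delta) (seq_sub (a t) (alpha_bar alpha))) p_infty 0.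
Proof.
  apply (is_lim_Series_dominated _ (fun k => gamma ^ k)).
  - apply ex_series_geom. rewrite Rabs_pos_eq; lra.
  - exists 0. intros t Ht k. unfold seq_sub, alpha_bar.
    assert (Hwk : 0 < (gamma / delta) ^ k) by apply pow_lt, weight_pos.
    split; [apply Rmult_le_pos; [lra | apply Rabs_pos]|].
    replace (gamma ^ k) with ((gamma / delta) ^ k * delta ^ k)
      by (rewrite <- Rpow_mult_distr; f_equal; field; lra).
    apply Rmult_le_compat_l; [lra | apply Rabs_a_coord_sub_le; lra].
  - intros k. unfold seq_sub, alpha_bar.
    replace (Finite 0)
      with (Rbar_mult ((gamma / delta) ^ k) (Rbar_abs (alpha ^ k - alpha ^ k)))
      by (simpl; rewrite Rminus_diag, Rabs_R0; f_equal; ring).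
    apply is_lim_scal_l, is_lim_Rabs.
    apply (is_lim_minus _ _ _ (alpha ^ k) (alpha ^ k));
      [apply is_lim_a_coord | apply is_lim_const | easy].
Qed.

End Solution.

Theorem proposition13 (alpha delta gamma : R) (a0 : seqR) (a : R -> seqR) :
  0 < alpha -> alpha <= delta ->
  0 < gamma -> gamma < 1 / 3 ->
  X_set alpha delta a0 ->
  is_H_solution (gamma / delta) ode_field a0 a ->
  (forall t, 0 <= t -> X_set alpha delta (a t)) /\
  is_lim (fun t => normH (gamma / delta) (seq_sub (a t) (alpha_bar alpha))) p_infty 0.
Proof.
  intros Halpha Hdelta Hgamma Hgamma3 Ha0 Hsol.
  assert (Hgamma1 : gamma < 1) by lra.
  split; [intros t Ht; split; [|split]|].
  - apply (a_coord_0 alpha delta gamma a0 a); assumption.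
  - apply (a_coord_1 alpha delta gamma a0 a); assumption.
  - intros k _. apply (a_coord_bounds alpha delta gamma a0 a); assumption.
  - apply (is_lim_normH_sub_alpha_bar alpha delta gamma a0 a); assumption.
Qed.
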